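(* (1) Let $(S,K,I)$ be an active split graph. Then $S$ is prime if and only if $\Phi(S)$ is connected. (2) Let $(S_1,K_1,I_1),\dots,(S_n,K_n,I_n)$ be pairwise vertex-disjoint prime split graphs and let $S=S_1\circ S_2\circ\cdots\circ S_n$, regarded as a split graph with bipartition $(K_1\cup\dots\cup K_n,\ I_1\cup\dots\cup I_n)$. Then $\Phi(S)=\Phi(S_1)\,\dot\cup\,\cdots\,\dot\cup\,\Phi(S_n)$ (disjoint union of multigraphs). (3) If $G$ is an active graph and $G=G_n\circ\cdots\circ G_1$ is its Tyshkevich decomposition into indecomposable factors each having at least one vertex (with $G_2,\dots,G_n$ split), then every factor $G_r$ is prime.
   Context: All graphs are finite and simple. A split graph is a graph $S$ whose vertex set is a disjoint union $V(S)=K\,\dot\cup\,I$ with $K$ a clique and $I$ an independent set; $(K,I)$ is called a bipartition of $S$, and $(S,K,I)$ denotes $S$ together with this fixed bipartition. A 2-switch in a graph $G$ is performed on four distinct vertices $a,b,c,d$ with $ab,cd\in E(G)$ and $ac,bd\notin E(G)$: it deletes $ab,cd$ and adds $ac,bd$; $a,b,c,d$ are said to participate in it. A vertex is active in $G$ if it participates in some 2-switch on $G$, otherwise inactive; $G$ is active if all its vertices are active. For a split graph $(S,K,I)$ and distinct $u,v\in I$, $\sigma_{uv}(S)$ is the number of induced subgraphs of $S$ isomorphic to $P_4$ containing both $u$ and $v$. The factor graph $\Phi(S)$ is the loopless multigraph with vertex set $I$ having exactly $\sigma_{uv}(S)$ parallel edges between $u$ and $v$. Graph notions (connected, complete, clique,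 etc.) applied to $\Phi(S)$ refer to its underlying simple graph, in which $u\sim v$ iff $\sigma_{uv}(S)\ge1$. Tyshkevich composition: for a split graph $(S,K,I)$ and a graph $G$ vertex-disjoint from $S$, $S\circ G$ is the graph with vertex set $V(S)\cup V(G)$ and edge set $E(S)\cup E(G)\cup\{xy: x\in K,\ y\in V(G)\}$ (a composition of a split graph with a split graph is split, with clique the union of the cliques and independent set the union of the independent sets). A graph $G$ is decomposable if $G=S\circ H$ for some split graph $S$ and graph $H$, each with at least one vertex; otherwise indecomposable. A graph is prime if it is active and indecomposable. Tyshkevich's theorem (known): every graph $G$ can be written as $G=G_n\circ\cdots\circ G_1$ with each $G_r$ indecomposable and $G_2,\dots,G_n$ split; with all $|G_r|\ge1$ this decomposition is unique up to isomorphism. *)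

(* Graphs are finite simple graphs whose vertex sets are
   finite subsets of a fixed finType T, with edges stored as 2-element sets. *)
From mathcomp Require Import all_boot.
Set Implicit Arguments. Unset Strict Implicit. Unset Printing Implicit Defensive.

Section Graphs.
Variable T : finType.

Record graph := Graph { gV : {set T}; gE : {set {set T}} }.

Definition wf (G : graph) : bool :=
  [forall e in gE G, (e \subset gV G) && (#|e| == 2)].

Definition adj (G : graph) (x y : T) : bool := [set x; y] \in gE G.

Definition clique (G : graph) (K : {set T}) : bool :=
  [forall x in K, forall y in K, (x != y) ==> adj G x y].

Definition indep (G : graph) (I : {set T}) : bool :=
  [forall x in I, forall y in I, ~~ adj G x y].

Definition split_graph (S : graph) (K I : {set T}) : bool :=
  [&& K :|: I == gV S, [disjoint K & I], clique S K & indep S I].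

Definition two_switch (G : graph) (a b c d : T) : bool :=
  [&& uniq [:: a; b; c; d], adj G a b, adj G c d, ~~ adj G a c & ~~ adj G b d].

Definition active_vertex (G : graph) (v : T) : bool :=
  [exists a, exists b, exists c, exists d,
     two_switch G a b c d && (v \in [:: a; b; c; d])].

Definition active (G : graph) : bool := [forall v in gV G, active_vertex G v].

Definition compose (S : graph) (K : {set T}) (H : graph) : graph :=
  Graph (gV S :|: gV H)
        (gE S :|: gE H :|: [set [set x; y] | x in K, y in gV H]).

Definition empty_graph : graph := Graph set0 set0.

Definition bigcompose (s : seq (graph * {set T})) : graph :=
  foldr (fun p G => compose p.1 p.2 G) empty_graph s.

Definition decomposable (G : graph) : Prop :=
  exists (S : graph) (K I : {set T}) (H : graph),
    [&& wf S, wf H, split_graph S K I, [disjoint gV S & gV H],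
        gV S != set0 & gV H != set0] /\ G = compose S K H.

Definition indecomposable (G : graph) : Prop := ~ decomposable G.

Definition prime_graph (G : graph) : Prop := active G /\ indecomposable G.

Definition induces_P4 (G : graph) (X : {set T}) : bool :=
  [exists x1, exists x2, exists x3, exists x4,
     [&& X == [set x1; x2; x3; x4], uniq [:: x1; x2; x3; x4],
         adj G x1 x2, adj G x2 x3, adj G x3 x4,
         ~~ adj G x1 x3, ~~ adj G x1 x4 & ~~ adj G x2 x4]].

Definition sigma (G : graph) (u v : T) : nat :=
  #|[set X : {set T} | [&& u \in X, v \in X & induces_P4 G X]]|.

(* underlying simple graph of the factor graph Phi(S) on vertex set I *)
Definition Phi_adj (G : graph) (I : {set T}) : rel T :=
  fun u v => [&& u \in I, v \in I, u != v & 0 < sigma G u v].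

Definition Phi_connected (G : graph) (I : {set T}) : Prop :=
  forall u v, u \in I -> v \in I -> connect (Phi_adj G I) u v.

End Graphs.

From mathcomp Require Import all_boot.
Set Implicit Arguments. Unset Strict Implicit. Unset Printing Implicit Defensive.

(* In S o H with (S, K, I) split, vertices of K are adjacent to every vertex of
   H and vertices of I to none, so every 2-switch of S o H, and hence every
   induced P4, lies entirely in S or entirely in H.  For (1): if S = S' o H, every vertex
   is active and each 2-switch of a split graph contains a vertex of I, so
   both sides meet I, while no edge of Phi crosses between them.  Conversely,
   two vertices of I are Phi-adjacent iff their neighbourhoods in K are
   incomparable.  If Phi is disconnected, let C be the component of a vertex
   u0 of minimum degree: the neighbourhood of every vertex of C is contained
   in that of every vertex of I outside C, so S = S[K' + C] o S[rest], where
   K' is the set of vertices of K with a neighbour in C. *)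

Section Tyshkevich.
Variable T : finType.
Implicit Types (G S H : graph T) (A B K I X : {set T}).

Lemma adjC G : symmetric (adj G).
Proof. by move=> x y; rewrite /adj setUC. Qed.

Lemma wf_adj G x y : wf G -> adj G x y -> [/\ x \in gV G, y \in gV G & x != y].
Proof.
move=> /forall_inP wfG /wfG /andP[/subsetP sub]; rewrite cards2.
by case: (x != y) => // _; rewrite !sub ?set21 ?set22.
Qed.

Lemma set4E (a b c d : T) : [set a; b; c; d] =i [:: a; b; c; d].
Proof. by move=> x; rewrite !inE -!orbA. Qed.

Lemma set4_subset A (a b c d : T) :
  {subset [:: a; b; c; d] <= A} -> [set a; b; c; d] \subset A.
Proof. by move=> sub; apply/subsetP => x; rewrite set4E; apply: sub. Qed.

Lemma two_switch_swap G a b c d : two_switch G a b c d -> two_switch G c d a b.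
Proof.
case/and5P=> uq Aab Acd Nac Nbd; apply/and5P; split=> //; try by rewrite adjC.
by rewrite (perm_uniq (permEl (perm_catC [:: c; d] [:: a; b]))).
Qed.

Lemma two_switch_flip G a b c d : two_switch G a b c d -> two_switch G b a d c.
Proof.
case/and5P=> uq Aab Acd Nac Nbd; apply/and5P; split=> //; try by rewrite adjC.
move: uq; rewrite /= !inE !negb_or => /and4P[/and3P[ab ac ad] /andP[bc bd] cd _].
by rewrite (eq_sym b a) (eq_sym d c) ab ac ad bc bd cd.
Qed.

Lemma two_switch_agree G1 G2 a b c d :
    {in [:: a; b; c; d] &, forall x y, adj G1 x y = adj G2 x y} ->
  two_switch G1 a b c d = two_switch G2 a b c d.
Proof. by move=> agree; rewrite /two_switch !agree // !inE eqxx ?orbT. Qed.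

Lemma induces_P4_switch G X : induces_P4 G X ->
  exists x1 x2 x3 x4, X = [set x1; x2; x3; x4] /\ two_switch G x1 x2 x3 x4.
Proof.
case/existsP=> x1 /existsP[x2 /existsP[x3 /existsP[x4]]].
case/and5P=> /eqP -> uq a12 _ /and4P[a34 n13 _ n24].
by exists x1, x2, x3, x4; split=> //; apply/and5P.
Qed.

Lemma induces_P4_agree G1 G2 X :
    {in X &, forall x y, adj G1 x y = adj G2 x y} ->
  induces_P4 G1 X = induces_P4 G2 X.
Proof.
move=> agree; do 4!(apply: eq_existsb => ?).
case: eqP => //= EX; by rewrite !agree // EX !inE eqxx ?orbT.
Qed.

Lemma induces_P4_sub G X : wf G -> induces_P4 G X -> X \subset gV G.
Proof.
move=> wfG /induces_P4_switch[x1 [x2 [x3 [x4 [-> /and5P[_ a12 a34 _ _]]]]]].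
have [v1 v2 _] := wf_adj wfG a12; have [v3 v4 _] := wf_adj wfG a34.
by apply: set4_subset; apply/allP; rewrite /= v1 v2 v3 v4.
Qed.

Lemma sigma_gt0P G u v :
  reflect (exists X, [/\ u \in X, v \in X & induces_P4 G X]) (0 < sigma G u v).
Proof.
rewrite /sigma card_gt0; apply: (iffP (set0Pn _)) => [[X]|[X [uX vX P4]]].
  by rewrite inE => /and3P[]; exists X.
by exists X; rewrite inE uX vX.
Qed.

Lemma sigmaC G u v : sigma G u v = sigma G v u.
Proof. by apply: eq_card => X; rewrite !inE andbCA. Qed.

Lemma sigma_eq0 G u v : wf G -> v \notin gV G -> sigma G u v = 0.
Proof.
move=> wfG vG; apply/eqP; rewrite eqn0Ngt; apply/sigma_gt0P => -[X [_ vX P4]].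
by rewrite (subsetP (induces_P4_sub wfG P4)) in vG.
Qed.

Lemma adj_compose S K H x y : adj (compose S K H) x y =
  [|| adj S x y, adj H x y, (x \in K) && (y \in gV H) | (y \in K) && (x \in gV H)].
Proof.
rewrite /adj /= !inE -!orbA; do 2!congr (_ || _).
apply/idP/idP => [/imset2P[k h kK hH /setP E]|/orP[]/andP[xK yH]]; last 2 first.
- by apply/imset2P; exists x y.
- by apply/imset2P; exists y x; rewrite // setUC.
have /set2P[Ex|Ex] : x \in [set k; h] by rewrite -E set21.
all: have /set2P[Ey|Ey] : y \in [set k; h] by rewrite -E set22.
all: subst x y; rewrite ?kK ?hH ?orbT //.
- have : h \in [set k; k] by rewrite E set22.
  by case/set2P=> Eh; subst h; rewrite hH.
- have : k \in [set h; h] by rewrite E set21.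
  by case/set2P=> Ek; subst k; rewrite kK.
Qed.

Definition induced G A := Graph A [set e in gE G | e \subset A].

Lemma adj_induced G A x y : x \in A -> y \in A -> adj (induced G A) x y = adj G x y.
Proof.
move=> xA yA; rewrite /adj inE andbC.
by have -> : [set x; y] \subset A by apply/subsetP => z /set2P[]->.
Qed.

Lemma wf_induced G A : wf G -> wf (induced G A).
Proof.
move=> /forall_inP wfG; apply/forall_inP => e; rewrite inE => /andP[eG eA].
by case/andP: (wfG e eG) => _ ->; rewrite eA.
Qed.

Lemma compose_induced G A B K : wf G -> gV G = A :|: B -> K \subset A ->
    {in A & B, forall x y, adj G x y = (x \in K)} ->
  G = compose (induced G A) K (induced G B).
Proof.
move=> /forall_inP wfG VG KA cross; case: G VG wfG cross => V E /= -> wfG cross.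
rewrite /compose /induced /=; congr Graph.
apply/setP => e; rewrite !inE -orbA; apply/idP/idP => [eE|].
  have /andP[eV /cards2P[x [y [_ exy]]]] := wfG e eE; subst e.
  have /subsetP xyV := eV; have := xyV x (set21 x y); have := xyV y (set22 x y).
  rewrite eE /= => /setUP[yA|yB] /setUP[xA|xB].
  - by rewrite (_ : [set x; y] \subset A) //; apply/subsetP => z /set2P[]->.
  - apply/or3P; apply: Or33; apply/imset2P; exists y x => //; last exact: setUC.
    by rewrite -(cross y x) // /adj setUC.
  - by apply/or3P; apply: Or33; apply/imset2P; exists x y; rewrite // -(cross x y).
  - by rewrite (_ : [set x; y] \subset B) ?orbT //; apply/subsetP => z /set2P[]->.
case/or3P=> [/andP[]|/andP[]|/imset2P[k h kK hB ->]] //.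
by have := cross k h (subsetP KA k kK) hB; rewrite kK.
Qed.

Section SplitGraph.
Variables (S : graph T) (K I : {set T}).
Hypotheses (wfS : wf S) (splitS : split_graph S K I).

Lemma split_vertexE x : (x \in gV S) = (x \in K) || (x \in I).
Proof. by case/and4P: splitS => /eqP <- _ _ _; rewrite inE. Qed.

Lemma split_cliqueF x : x \in K -> (x \in I) = false.
Proof. by case/and4P: splitS => _ disjKI _ _; apply: disjointFr. Qed.

Lemma split_cliqueV x : x \in K -> x \in gV S.
Proof. by rewrite split_vertexE => ->. Qed.

Lemma split_indepV x : x \in I -> x \in gV S.
Proof. by rewrite split_vertexE orbC => ->. Qed.

Lemma split_adjK x y : x \in K -> y \in K -> x != y -> adj S x y.
Proof.
case/and4P: splitS => _ _ /forall_inP cliqueK _ xK yK.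
by move: (cliqueK x xK) => /forall_inP /(_ y yK) /implyP.
Qed.

Lemma split_nadjI x y : x \in I -> y \in I -> ~~ adj S x y.
Proof.
case/and4P: splitS => _ _ _ /forall_inP indepI xI yI.
by move: (indepI x xI) => /forall_inP /(_ y yI).
Qed.

Lemma split_adjI x y : x \in I -> adj S x y -> y \in K.
Proof.
move=> xI Axy; have [_ yS _] := wf_adj wfS Axy.
move: yS; rewrite split_vertexE => /orP[] // yI.
by rewrite (negbTE (split_nadjI xI yI)) in Axy.
Qed.

End SplitGraph.

Section Composition.
Variables (S H : graph T) (K I : {set T}).
Hypotheses (wfS : wf S) (wfH : wf H) (disjSH : [disjoint gV S & gV H]).
Hypothesis splitSH : gV H != set0 -> split_graph S K I.
Local Notation C := (compose S K H).

Lemma disjoint_clique_H : [disjoint K & gV H].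
Proof.
have [->|/splitSH splitS] := eqVneq (gV H) set0; first by rewrite -setI_eq0 setI0.
by apply: disjointWl disjSH; apply/subsetP => x /(split_cliqueV splitS).
Qed.

Lemma adj_composeS x y : x \in gV S -> y \in gV S -> adj C x y = adj S x y.
Proof.
move=> xS yS; have xH := disjointFr disjSH xS; have yH := disjointFr disjSH yS.
rewrite adj_compose xH yH !andbF !orbF; case: (boolP (adj H x y)) => [Axy|]; last by rewrite orbF.
by have [] := wf_adj wfH Axy; rewrite xH.
Qed.

Lemma adj_composeH x y : x \in gV H -> y \in gV H -> adj C x y = adj H x y.
Proof.
move=> xH yH; have xK := disjointFl disjoint_clique_H xH.
have yK := disjointFl disjoint_clique_H yH.
rewrite adj_compose xK yK /= !orbF; case: (boolP (adj S x y)) => // Axy.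
by have [xS _ _] := wf_adj wfS Axy; rewrite (disjointFr disjSH xS) in xH.
Qed.

Lemma wf_compose : wf C.
Proof.
apply/forall_inP => e; rewrite !inE -orbA => /or3P[eS|eH|/imset2P[k h kK hH ->]].
- by move/forall_inP: wfS => /(_ e eS)/andP[eV ->]; rewrite (subset_trans eV) ?subsetUl.
- by move/forall_inP: wfH => /(_ e eH)/andP[eV ->]; rewrite (subset_trans eV) ?subsetUr.
have splitS : split_graph S K I by apply: splitSH; apply/set0Pn; exists h.
have kS := split_cliqueV splitS kK.
have kh : k != h by apply: contraTneq hH => <-; rewrite (disjointFr disjSH kS).
rewrite cards2 kh andbT; apply/subsetP => z /set2P[]->; by rewrite inE ?kS ?hH ?orbT.
Qed.

Lemma compose_adjH x y : x \in gV H -> adj C x y -> (y \in K) || (y \in gV H).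
Proof.
move=> xH; rewrite adj_compose => /or4P[Axy|Axy|/andP[_ ->]|/andP[->]]; rewrite ?orbT //.
- by have [xS _ _] := wf_adj wfS Axy; rewrite (disjointFr disjSH xS) in xH.
- by have [_ -> _] := wf_adj wfH Axy; rewrite orbT.
Qed.

Section SplitFactor.
Hypothesis splitS : split_graph S K I.

Lemma compose_vertex x : x \in gV C -> [|| x \in K, x \in I | x \in gV H].
Proof. by rewrite inE (split_vertexE splitS) -orbA. Qed.

Lemma compose_nadjH x y :
  x \in gV H -> y \in gV C -> ~~ adj C x y -> (y \in I) || (y \in gV H).
Proof.
move=> xH /compose_vertex/or3P[yK|->|->]; rewrite ?orbT //.
by rewrite adj_compose yK xH !orbT.
Qed.

Lemma compose_nadjK x y : x \in K -> y \in gV C -> x != y -> ~~ adj C x y -> y \in I.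
Proof.
move=> xK /compose_vertex/or3P[yK|->//|yH] xy.
  by rewrite adj_composeS ?(split_adjK splitS) ?(split_cliqueV splitS).
by rewrite adj_compose xK yH !orbT.
Qed.

Lemma compose_adjI x y : x \in I -> adj C x y -> y \in K.
Proof.
move=> xI; have xS := split_indepV splitS xI.
rewrite adj_compose => /or4P[/(split_adjI wfS splitS xI)//|Axy|/andP[xK _]|/andP[//]].
  by have [xH _ _] := wf_adj wfH Axy; rewrite (disjointFr disjSH xS) in xH.
by rewrite (split_cliqueF splitS xK) in xI.
Qed.

End SplitFactor.

(* A vertex of K has all its non-neighbours in I, a vertex of I all its
   neighbours in K, so the alternating cycle a-b-d-c cannot leave H. *)
Lemma two_switch_composeH a b c d :
  two_switch C a b c d -> a \in gV H -> (b \in gV H) && (c \in gV H).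
Proof.
move=> sw aH; have splitS : split_graph S K I by apply: splitSH; apply/set0Pn; exists a.
have /and5P[uq Aab Acd Nac Nbd] := sw.
have [_ bC _] := wf_adj wf_compose Aab; have [cC dC _] := wf_adj wf_compose Acd.
move: uq; rewrite /= !inE !negb_or => /and4P[/and3P[_ ac _] /andP[_ bd] _ _].
have bH : b \in gV H.
  case/orP: (compose_adjH aH Aab) => // bK.
  have dI := compose_nadjK splitS bK dC bd Nbd.
  have cK : c \in K by apply: (compose_adjI splitS dI); rewrite adjC.
  case/orP: (compose_nadjH splitS aH cC Nac) => [cI|cH].
    by rewrite (split_cliqueF splitS cK) in cI.
  by rewrite (disjointFr disjoint_clique_H cK) in cH.
rewrite bH /=; case/orP: (compose_nadjH splitS aH cC Nac) => // cI.
have dK := compose_adjI splitS cI Acd.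
have bI : b \in I by apply: (compose_nadjK splitS dK bC); rewrite 1?eq_sym 1?adjC.
by rewrite (disjointFr disjSH (split_indepV splitS bI)) in bH.
Qed.

Lemma two_switch_compose a b c d : two_switch C a b c d ->
  {subset [:: a; b; c; d] <= gV S} \/ {subset [:: a; b; c; d] <= gV H}.
Proof.
move=> sw; have swH := two_switch_composeH.
have aH_of x : x \in [:: a; b; c; d] -> x \in gV H -> a \in gV H.
  have aH_of_c : c \in gV H -> a \in gV H.
    by move=> cH; case/andP: (swH _ _ _ _ (two_switch_swap sw) cH).
  rewrite !inE => /or4P[]/eqP-> xH //.
  - by case/andP: (swH _ _ _ _ (two_switch_flip sw) xH).
  - exact: aH_of_c.
  - by case/andP: (swH _ _ _ _ (two_switch_flip (two_switch_swap sw)) xH) => /aH_of_c.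
have [aH|aS] := boolP (a \in gV H).
  have /andP[bH cH] := swH _ _ _ _ sw aH.
  have /andP[dH _] := swH _ _ _ _ (two_switch_swap sw) cH.
  by right; apply/allP; rewrite /= aH bH cH dH.
left => x xs; have /and5P[_ Aab Acd _ _] := sw.
have [aC bC _] := wf_adj wf_compose Aab; have [cC dC _] := wf_adj wf_compose Acd.
have /allP/(_ x xs) : all (mem (gV C)) [:: a; b; c; d] by rewrite /= aC bC cC dC.
by rewrite /= inE => /orP[] // /(aH_of x xs); rewrite (negbTE aS).
Qed.

Lemma induces_P4_compose X : induces_P4 C X -> X \subset gV S \/ X \subset gV H.
Proof.
move=> /induces_P4_switch[x1 [x2 [x3 [x4 [-> /two_switch_compose sub]]]]].
by case: sub => sub; [left|right]; apply: set4_subset.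
Qed.

End Composition.

Section FactorGraph.
Variables (S : graph T) (K I : {set T}).
Hypotheses (wfS : wf S) (splitS : split_graph S K I).
Local Notation Phi := (Phi_adj S I).

Lemma two_switch_split a b c d : two_switch S a b c d -> (a \in I) || (c \in I).
Proof.
case/and5P=> uq Aab Acd Nac _; have [aS _ _] := wf_adj wfS Aab.
have [cS _ _] := wf_adj wfS Acd.
move: aS cS; rewrite !(split_vertexE splitS) => /orP[aK|->//] /orP[cK|->]; last by rewrite orbT.
move: uq; rewrite /= !inE !negb_or => /and4P[/and3P[_ ac _] _ _ _].
by rewrite (split_adjK splitS aK cK ac) in Nac.
Qed.

Lemma induces_P4_split X : induces_P4 S X -> exists x1 x2 x3 x4,
  [/\ X = [set x1; x2; x3; x4], x2 \in K, x3 \in K &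
      [/\ adj S x2 x1, ~~ adj S x2 x4, adj S x3 x4 & ~~ adj S x3 x1]].
Proof.
case/existsP=> x1 /existsP[x2 /existsP[x3 /existsP[x4]]].
case/and5P=> /eqP-> uq A12 A23 /and4P[A34 N13 _ N24].
have [x1S x2S _] := wf_adj wfS A12; have [x3S x4S _] := wf_adj wfS A34.
move: uq; rewrite /= !inE !negb_or => /and4P[/and3P[_ x13 _] /andP[_ x24] _ _].
have nbrI x y : x \in I -> adj S y x -> y \in K.
  by move=> xI; rewrite adjC; apply: (split_adjI wfS splitS xI).
have x2K : x2 \in K.
  move: x2S; rewrite (split_vertexE splitS) => /orP[//|x2I].
  have A32 : adj S x3 x2 by rewrite adjC.
  by rewrite (split_adjK splitS (nbrI _ _ x2I A12) (nbrI _ _ x2I A32) x13) in N13.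
have x3K : x3 \in K.
  move: x3S; rewrite (split_vertexE splitS) => /orP[//|x3I].
  by rewrite (split_adjK splitS x2K (split_adjI wfS splitS x3I A34) x24) in N24.
by exists x1, x2, x3, x4; split; rewrite // ?(adjC S x2 x1) ?(adjC S x3 x1).
Qed.

Definition Knbhd u := [set k in K | adj S k u].

Lemma Phi_adjE u v : u \in I -> v \in I -> u != v ->
  Phi u v = ~~ (Knbhd u \subset Knbhd v) && ~~ (Knbhd v \subset Knbhd u).
Proof.
move=> uI vI uv; rewrite /Phi_adj uI vI uv /=; apply/sigma_gt0P/idP.
  case=> X [uX vX /induces_P4_split[x1 [x2 [x3 [x4 [EX x2K x3K [A21 N24 A34 N31]]]]]]].
  have ends z : z \in I -> z \in X -> (z == x1) || (z == x4).
    move=> zI; rewrite EX !inE -!orbA => /or4P[]/eqP Ez; subst z; rewrite ?eqxx ?orbT //.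
      by rewrite (split_cliqueF splitS x2K) in zI.
    by rewrite (split_cliqueF splitS x3K) in zI.
  have incomp : ~~ (Knbhd x1 \subset Knbhd x4) && ~~ (Knbhd x4 \subset Knbhd x1).
    by apply/andP; split; apply/subsetPn; [exists x2 | exists x3]; rewrite !inE ?x2K ?x3K.
  case/orP: (ends u uI uX) => /eqP Eu; case/orP: (ends v vI vX) => /eqP Ev; subst u v;
    by rewrite ?eqxx // andbC in uv *.
case/andP=> /subsetPn[k1]; rewrite !inE => /andP[k1K A1u]; rewrite k1K /= => N1v.
move=> /subsetPn[k2]; rewrite !inE => /andP[k2K A2v]; rewrite k2K /= => N2u.
exists [set u; k1; k2; v]; rewrite !inE !eqxx ?orbT; split=> //.
apply/existsP; exists u; apply/existsP; exists k1.
apply/existsP; exists k2; apply/existsP; exists v.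
have neqKI z w : z \in K -> w \in I -> (z == w) = false.
  by move=> zK wI; apply/negbTE; apply: contraTneq wI => <-; rewrite (split_cliqueF splitS zK).
have k12 : (k1 == k2) = false by apply/negbTE; apply: contraNneq N2u => <-.
rewrite eqxx /= !inE !negb_or (eq_sym u k1) (eq_sym u k2) uv k12.
rewrite (neqKI k1 u k1K uI) (neqKI k2 u k2K uI) (neqKI k1 v k1K vI) (neqKI k2 v k2K vI).
rewrite (adjC S u k1) A1u (split_adjK splitS k1K k2K) ?k12 // A2v (adjC S u k2) N2u.
by rewrite (split_nadjI splitS uI vI).
Qed.

Lemma Phi_sym : symmetric Phi.
Proof. by move=> x y; rewrite /Phi_adj sigmaC eq_sym andbCA. Qed.

Lemma connect_PhiI x y : x \in I -> connect Phi x y -> y \in I.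
Proof.
have closedI : closed Phi (mem I) by move=> u v /and3P[-> -> _].
by move=> xI /(closed_connect closedI); rewrite xI => <-.
Qed.

Lemma Knbhd_comparable u v : u \in I -> v \in I -> ~~ Phi u v ->
  (Knbhd u \subset Knbhd v) || (Knbhd v \subset Knbhd u).
Proof.
move=> uI vI; have [->|uv] := eqVneq u v; first by rewrite subxx.
by rewrite Phi_adjE // negb_and !negbK.
Qed.

Lemma split_induced K' I' : K' \subset K -> I' \subset I ->
  split_graph (induced S (K' :|: I')) K' I'.
Proof.
move=> K'K I'I; rewrite /split_graph /= eqxx.
case/and4P: splitS => _ disjKI _ _; rewrite (disjointW K'K I'I disjKI) /=.
apply/andP; split; apply/forall_inP => x xA; apply/forall_inP => y yA.
  apply/implyP => xy; rewrite adj_induced ?inE ?xA ?yA ?orbT //.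
  exact: (split_adjK splitS (subsetP K'K x xA) (subsetP K'K y yA) xy).
rewrite adj_induced ?inE ?xA ?yA ?orbT //.
exact: (split_nadjI splitS (subsetP I'I x xA) (subsetP I'I y yA)).
Qed.

Section Component.
Variable u0 : T.
Hypotheses (u0I : u0 \in I) (u0_min : {in I, forall x, #|Knbhd u0| <= #|Knbhd x|}).

(* Along the component, neighbourhoods stay comparable with [Knbhd w] and
   Phi-neighbours have incomparable ones, so inclusion in [Knbhd w] propagates
   from [u0], where it holds by minimality. *)
Lemma Knbhd_component_sub w u : w \in I -> ~~ connect Phi u0 w ->
  connect Phi u0 u -> Knbhd u \subset Knbhd w.
Proof.
move=> wI u0w.
have cmp x : connect Phi u0 x -> (Knbhd x \subset Knbhd w) || (Knbhd w \subset Knbhd x).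
  move=> cx; apply: Knbhd_comparable (connect_PhiI u0I cx) wI _.
  by apply: contra u0w => /connect1; apply: connect_trans cx.
pose P := [pred x | connect Phi u0 x ==> (Knbhd x \subset Knbhd w)].
have closedP : closed Phi P.
  move=> x y Pxy; have cxy : connect Phi u0 x = connect Phi u0 y.
    exact: (connect_closed (sym_connect_sym Phi_sym) u0 Pxy).
  rewrite !inE cxy; case cy: (connect Phi u0 y) => //=.
  have cx : connect Phi u0 x by rewrite cxy.
  case/and4P: (Pxy) => xI yI xy _; move: Pxy; rewrite Phi_adjE // => /andP[Nxy Nyx].
  apply/idP/idP => sub.
    by case/orP: (cmp _ cy) => // wy; rewrite (subset_trans sub wy) in Nxy.
  by case/orP: (cmp _ cx) => // wx; rewrite (subset_trans sub wx) in Nyx.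
move=> cu; have := closed_connect closedP cu; rewrite !inE connect0 cu /= => <-.
case/orP: (cmp _ (connect0 _ _)) => // wu0.
have /eqP-> // : Knbhd w == Knbhd u0 by rewrite eqEcard wu0 u0_min.
Qed.

Local Notation C := [set x | connect Phi u0 x].
Local Notation K1 := [set k in K | [exists x in C, adj S k x]].

Lemma component_subI : C \subset I.
Proof. by apply/subsetP => x; rewrite inE; apply: connect_PhiI. Qed.

Lemma component_clique_sub : K1 \subset K.
Proof. by apply/subsetP => x; rewrite inE => /andP[]. Qed.

Lemma component_notK1 x : x \in C -> x \notin K1.
Proof.
move=> /(subsetP component_subI) xI; apply: contraL xI.
by move=> /(subsetP component_clique_sub)/(split_cliqueF splitS)->.
Qed.

Lemma component_cross x y : x \in K1 :|: C -> y \in (K :\: K1) :|: (I :\: C) ->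
  adj S x y = (x \in K1).
Proof.
rewrite !in_setU !in_setD => /orP[xK1|xC] /orP[/andP[yK1 yK]|/andP[yC yI]].
- have xK := subsetP component_clique_sub x xK1.
  by rewrite xK1 (split_adjK splitS xK yK) //; apply: contraNneq yK1 => <-.
- rewrite xK1; move: xK1; rewrite inE => /andP[xK /exists_inP[u uC Axu]].
  have : x \in Knbhd u by rewrite inE xK.
  rewrite inE in yC; rewrite inE in uC.
  by move/(subsetP (Knbhd_component_sub yI yC uC)); rewrite inE => /andP[].
- rewrite (negbTE (component_notK1 xC)); apply/negbTE; apply: contra yK1 => Axy.
  by rewrite inE yK; apply/exists_inP; exists x; rewrite // adjC.
- rewrite (negbTE (component_notK1 xC)); apply/negbTE.
  exact: (split_nadjI splitS (subsetP component_subI x xC) yI).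
Qed.

Lemma component_decomposable w : w \in I -> ~~ connect Phi u0 w -> decomposable S.
Proof.
move=> wI u0w; set A := K1 :|: C; set B := (K :\: K1) :|: (I :\: C).
have K1K := component_clique_sub; have CI := component_subI.
have VS : gV S = A :|: B.
  apply/setP => x; rewrite (split_vertexE splitS) !in_setU !in_setD.
  case: (boolP (x \in K1)) => [/(subsetP K1K)->//|_].
  by case: (boolP (x \in C)) => [/(subsetP CI)->|_]; rewrite ?orbT.
have disjAB : [disjoint A & B].
  rewrite -setI_eq0; apply/eqP/setP => x; rewrite in_setI !in_setU !in_setD in_set0.
  case: (boolP (x \in K1)) => [xK1|_]; case: (boolP (x \in C)) => [xC|_] //=.
    exact: (split_cliqueF splitS (subsetP K1K x xK1)).
  by rewrite orbF; apply: contraTF (subsetP CI x xC) => /(split_cliqueF splitS)->.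
exists (induced S A), K1, C, (induced S B); split; last first.
  exact: (compose_induced wfS VS (subsetUl _ _) component_cross).
rewrite !wf_induced // split_induced // disjAB /=; apply/andP; split; apply/set0Pn.
  by exists u0; rewrite in_setU [u0 \in C]inE connect0 orbT.
by exists w; rewrite in_setU [w \in I :\: C]in_setD [w \in C]inE wI u0w orbT.
Qed.

End Component.

Lemma indecomposable_Phi_connected : indecomposable S -> Phi_connected S I.
Proof.
move=> indec u v uI vI; apply/negPn/negP => nc; apply: indec.
case: (arg_minnP (fun x => #|Knbhd x|) uI) => u0 u0I u0_min.
case cu: (connect Phi u0 u); last exact: (component_decomposable u0I u0_min uI (negbT cu)).
apply: (component_decomposable u0I u0_min vI); apply: contra nc => cv.
by apply: (connect_trans _ cv); rewrite (sym_connect_sym Phi_sym).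
Qed.

Lemma Phi_connected_indecomposable : active S -> Phi_connected S I -> indecomposable S.
Proof.
move=> /forall_inP act conn [S1 [K1 [I1 [H [/and5P[wfS1 wfH split1 disj /andP[ne1 neH]] ES]]]]].
have splitH : gV H != set0 -> split_graph S1 K1 I1 by [].
have sameSide A x y : (A \subset gV S1) || (A \subset gV H) -> x \in A -> y \in A ->
    (x \in gV S1) = (y \in gV S1).
  case/orP=> /subsetP sub xA yA; first by rewrite !sub.
  by rewrite (disjointFl disj (sub x xA)) (disjointFl disj (sub y yA)).
have witness x : x \in gV S -> exists2 w, w \in I & (w \in gV S1) = (x \in gV S1).
  move=> /act/existsP[a /existsP[b /existsP[c /existsP[d /andP[sw xs]]]]].
  have swC : two_switch (compose S1 K1 H) a b c d by rewrite -ES.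
  have sub : ([set a; b; c; d] \subset gV S1) || ([set a; b; c; d] \subset gV H).
    by case: (two_switch_compose wfS1 wfH disj splitH swC) => /set4_subset ->; rewrite ?orbT.
  rewrite -set4E in xs.
  by case/orP: (two_switch_split sw) => wI; [exists a | exists c];
    rewrite // (sameSide _ _ _ sub _ xs) // !inE eqxx ?orbT.
have closedS1 : closed Phi (mem (gV S1)).
  move=> a b /and4P[_ _ _ /sigma_gt0P[X [aX bX P4]]].
  have P4C : induces_P4 (compose S1 K1 H) X by rewrite -ES.
  have sub : (X \subset gV S1) || (X \subset gV H).
    by case: (induces_P4_compose wfS1 wfH disj splitH P4C) => ->; rewrite ?orbT.
  exact: (sameSide _ _ _ sub aX bX).
have [x1 x1S] := set0Pn _ ne1; have [x2 x2H] := set0Pn _ neH.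
have [w1 w1I e1] : exists2 w, w \in I & (w \in gV S1) = (x1 \in gV S1).
  by apply: witness; rewrite ES /= inE x1S.
have [w2 w2I e2] : exists2 w, w \in I & (w \in gV S1) = (x2 \in gV S1).
  by apply: witness; rewrite ES /= inE x2H orbT.
have := closed_connect closedS1 (conn w1 w2 w1I w2I).
by rewrite /= e1 e2 x1S (disjointFl disj x2H).
Qed.

End FactorGraph.

Section Chain.
Variables (J : eqType) (Gs : J -> graph T) (Ks : J -> {set T}).
Hypothesis wfGs : forall k, wf (Gs k).
Hypothesis disjGs : forall k j, k != j -> [disjoint gV (Gs k) & gV (Gs j)].
Local Notation chain r := (bigcompose [seq (Gs k, Ks k) | k <- r]).

(* The last factor of [r] is the innermost one, G_1, which need not be split. *)
Definition composable (r : seq J) :=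
  uniq r /\ forall k, k \in r -> k != last k r -> exists I, split_graph (Gs k) (Ks k) I.

Lemma mem_chain r x : (x \in gV (chain r)) = has (fun k => x \in gV (Gs k)) r.
Proof. by elim: r => [|k r IH] /=; rewrite ?inE // IH. Qed.

Lemma factor_unique k j x : x \in gV (Gs k) -> x \in gV (Gs j) -> k = j.
Proof. by move=> xk xj; apply/eqP; apply: contraTT xj => /disjGs/disjointFr->. Qed.

Lemma disjoint_chain k r : k \notin r -> [disjoint gV (Gs k) & gV (chain r)].
Proof.
move=> kr; rewrite disjoint_subset; apply/subsetP => x xk.
rewrite inE mem_chain; apply/hasP => -[j jr xj].
by rewrite (factor_unique xk xj) jr in kr.
Qed.

Lemma composable_cons k r : composable (k :: r) -> [/\ composable r, k \notin r &
  exists I, gV (chain r) != set0 -> split_graph (Gs k) (Ks k) I].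
Proof.
case=> /andP[kr ur] spl; split=> //.
  split=> // j jr; have lastE : last k r = last j r by case: r {kr ur spl} jr.
  by move=> jl; apply: spl; rewrite /= ?inE ?jr ?orbT // lastE.
case: r kr {ur} spl => [|z r] kr spl; first by exists set0; rewrite eqxx.
have [|I splitk] := spl k (mem_head _ _); last by exists I.
by rewrite /=; apply: contraNneq kr => ->; apply: mem_last.
Qed.

Lemma wf_chain r : composable r -> wf (chain r).
Proof.
elim: r => [_|k r IH /composable_cons[cr kr [I splitk]]].
  by apply/forall_inP => e; rewrite inE.
exact: wf_compose (wfGs k) (IH cr) (disjoint_chain kr) splitk.
Qed.

Lemma adj_chain r k x y : composable r -> k \in r ->
  x \in gV (Gs k) -> y \in gV (Gs k) -> adj (chain r) x y = adj (Gs k) x y.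
Proof.
elim: r => // j r IH /composable_cons[cr jr [I splitj]].
rewrite inE => /predU1P[->|kr] xk yk /=.
  exact: (adj_composeS (Ks j) (wf_chain cr) (disjoint_chain jr) xk yk).
have inr z : z \in gV (Gs k) -> z \in gV (chain r).
  by move=> zk; rewrite mem_chain; apply/hasP; exists k.
by rewrite (adj_composeH (wfGs j) (disjoint_chain jr) splitj) ?inr // IH.
Qed.

Lemma two_switch_chain r a b c d : composable r -> two_switch (chain r) a b c d ->
  exists2 k, k \in r & {subset [:: a; b; c; d] <= gV (Gs k)}.
Proof.
elim: r => [_ /and5P[_ Aab _ _ _]|j r IH /composable_cons[cr jr [I splitj]] sw].
  by rewrite /adj inE in Aab.
case: (two_switch_compose (wfGs j) (wf_chain cr) (disjoint_chain jr) splitj sw) => sub.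
  by exists j; rewrite ?mem_head.
have [|k kr subk] := IH cr; last by exists k; rewrite // inE kr orbT.
rewrite -(two_switch_agree (G1 := compose (Gs j) (Ks j) (chain r))) // => x y xs ys.
by rewrite (adj_composeH (wfGs j) (disjoint_chain jr) splitj) ?sub.
Qed.

Lemma induces_P4_chain r X : composable r -> induces_P4 (chain r) X ->
  exists2 k, k \in r & X \subset gV (Gs k).
Proof.
move=> cr /induces_P4_switch[x1 [x2 [x3 [x4 [-> /(two_switch_chain cr)[k kr sub]]]]]].
by exists k => //; apply: set4_subset.
Qed.

Lemma sigma_chain r k u v : composable r -> k \in r -> u \in gV (Gs k) ->
  sigma (chain r) u v = sigma (Gs k) u v.
Proof.
move=> cr kr uk; apply: eq_card => X; rewrite !inE; apply: andb_id2l => uX.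
have agree : X \subset gV (Gs k) ->
    {in X &, forall x y, adj (chain r) x y = adj (Gs k) x y}.
  by move=> XS x y xX yX; rewrite (adj_chain cr kr) ?(subsetP XS).
congr (_ && _); apply/idP/idP => P4.
  have [j _ XS] := induces_P4_chain cr P4.
  have jk := factor_unique (subsetP XS u uX) uk; subst j.
  by rewrite -(induces_P4_agree (agree XS)).
by rewrite (induces_P4_agree (agree (induces_P4_sub (wfGs k) P4))).
Qed.

Lemma active_chain r k : composable r -> active (chain r) -> k \in r -> active (Gs k).
Proof.
move=> cr /forall_inP act kr; apply/forall_inP => v vk.
have vC : v \in gV (chain r) by rewrite mem_chain; apply/hasP; exists k.
have /existsP[a /existsP[b /existsP[c /existsP[d /andP[sw vs]]]]] := act v vC.
have [j _ sub] := two_switch_chain cr sw.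
have jk := factor_unique (sub v vs) vk; subst j.
apply/existsP; exists a; apply/existsP; exists b; apply/existsP; exists c.
apply/existsP; exists d; rewrite vs andbT -(two_switch_agree (G1 := chain r)) // => x y xs ys.
by rewrite (adj_chain cr kr) ?sub.
Qed.

End Chain.

End Tyshkevich.

Lemma ord_neq_last_rev_enum n (k : 'I_n) : k != last k (rev (enum 'I_n)) -> 0 < k.
Proof.
case: n k => [[]//|n] k; rewrite enum_ordSl rev_cons last_rcons lt0n.
by apply: contraNneq => k0; apply/eqP/val_inj.
Qed.

Theorem theorem2p7 (T : finType) :
  (* (1) *)
  (forall (S : graph T) (K I : {set T}),
     wf S -> split_graph S K I -> active S ->
     (prime_graph S <-> Phi_connected S I)) /\
  (* (2) *)
  (forall (n : nat) (S : 'I_n -> graph T) (K I : 'I_n -> {set T}),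
     (forall i, wf (S i)) ->
     (forall i, split_graph (S i) (K i) (I i)) ->
     (forall i, prime_graph (S i)) ->
     (forall i j, i != j -> [disjoint gV (S i) & gV (S j)]) ->
     forall (i j : 'I_n) (u v : T), u \in I i -> v \in I j -> u != v ->
       sigma (bigcompose [seq (S k, K k) | k <- enum 'I_n]) u v
       = (if i == j then sigma (S i) u v else 0)) /\
  (* (3) : factor r : 'I_n stands for G_(r+1); G = G_n o ... o G_1 *)
  (forall (G : graph T) (n : nat) (Gs : 'I_n -> graph T) (Ks Is : 'I_n -> {set T}),
     wf G -> active G ->
     (forall r, wf (Gs r)) ->
     (forall r, gV (Gs r) != set0) ->
     (forall r j, r != j -> [disjoint gV (Gs r) & gV (Gs j)]) ->
     (forall r : 'I_n, 0 < val r -> split_graph (Gs r) (Ks r) (Is r)) ->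
     (forall r, indecomposable (Gs r)) ->
     G = bigcompose [seq (Gs r, Ks r) | r <- rev (enum 'I_n)] ->
     forall r, prime_graph (Gs r)).
Proof.
split; [|split].
- move=> S K I wfS splitS act; split=> [[_ indec]|conn].
    exact: (indecomposable_Phi_connected wfS splitS indec).
  by split=> //; apply: (Phi_connected_indecomposable wfS splitS act conn).
-
  move=> n S K I wfS splitS _ disjS i j u v uI vJ _.
  have chainS : composable S K (enum 'I_n).
    by split=> [|k _ _]; [exact: enum_uniq | exists (I k)].
  rewrite (sigma_chain wfS disjS v chainS (mem_enum _ i) (split_indepV (splitS i) uI)).
  case: eqVneq => [//|ij]; apply: sigma_eq0 => //.
  by rewrite (disjointFl (disjS i j ij) (split_indepV (splitS j) vJ)).
- move=> G n Gs Ks Is _ actG wfGs _ disjGs splitGs indec EG r; split=> //.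
  have chainG : composable Gs Ks (rev (enum 'I_n)).
    split=> [|k _ /ord_neq_last_rev_enum k0]; first by rewrite rev_uniq enum_uniq.
    by exists (Is k); apply: splitGs.
  by apply: (active_chain wfGs disjGs chainG); rewrite -?EG // mem_rev mem_enum.
Qed.
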